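(* Let $f = \sum_{i=0}^{n} c_i x^{k_i} \in \mathbb{N}_0[x^{\pm 1}]$, with $c_0,\ldots,c_n$ positive integers and $k_0 > \cdots > k_n$ integers, and suppose $|\operatorname{supp}(f)| > 1$. Then $f$ is irreducible in $\mathbb{N}_0[x^{\pm 1}]$ if and only if $f$ is monolithic and $\gcd(c_0,\ldots,c_n) = 1$.
   Context: $\mathbb{N}_0[x^{\pm 1}]$ denotes the semiring of Laurent polynomials in $x$ with nonnegative integer coefficients; $\operatorname{supp}(f)$ is the set of exponents occurring in $f$ with nonzero coefficient. The units of $\mathbb{N}_0[x^{\pm 1}]$ are exactly $x^k$, $k\in\mathbb{Z}$. An element $f$ is irreducible if it is nonzero, not a unit, and whenever $f = gh$ one of $g,h$ is a unit. A nonzero $f \in \mathbb{N}_0[x^{\pm 1}]$ is monolithic if whenever $f = gh$ with $g,h \in \mathbb{N}_0[x^{\pm 1}]$, one of $g, h$ is a monomial, i.e. of the form $c x^k$ with $c$ a positive integer and $k \in \mathbb{Z}$. *)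

From mathcomp Require Import all_boot all_algebra.
Set Implicit Arguments. Unset Strict Implicit. Unset Printing Implicit Defensive.
Import GRing.Theory.

(* The semiring N_0[x^{+-1}] of Laurent polynomials with nonnegative integer
   coefficients.  An element is represented as x^(lshift f) * (lpol f) with
   lpol f an ordinary polynomial with coefficients in nat.  Two representations
   denote the same element iff they have the same coefficient function
   [coefL], so all notions below are stated up to [eqL]. *)
Record lpoly := LP { lshift : int; lpol : {poly nat} }.

Definition coefL (f : lpoly) (i : int) : nat :=
  if (lshift f <= i)%R then ((lpol f)`_(absz (i - lshift f)))%R else 0%N.

Definition eqL (f g : lpoly) : Prop := forall i, coefL f i = coefL g i.

Definition mulL (f g : lpoly) : lpoly :=
  LP (lshift f + lshift g)%R (lpol f * lpol g)%R.

Definition zeroL : lpoly := LP 0%R 0%R.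
Definition oneL : lpoly := LP 0%R 1%R.

Definition monoL (c : nat) (k : int) : lpoly := LP k (c%:R)%:P.

Definition suppL (f : lpoly) : int -> Prop := fun i => coefL f i <> 0%N.

Definition unitL (u : lpoly) : Prop := exists v, eqL (mulL u v) oneL.

Definition irreducibleL (f : lpoly) : Prop :=
  ~ eqL f zeroL /\ ~ unitL f /\
  forall g h, eqL f (mulL g h) -> unitL g \/ unitL h.

Definition monomialL (g : lpoly) : Prop :=
  exists c k, (0 < c)%N /\ eqL g (monoL c k).

Definition monolithicL (f : lpoly) : Prop :=
  ~ eqL f zeroL /\
  forall g h, eqL f (mulL g h) -> monomialL g \/ monomialL h.

From Pilot Require Import Defs.
From mathcomp Require Import all_boot all_order all_algebra zify.
Import Order.TTheory GRing.Theory Num.Theory.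
Set Implicit Arguments. Unset Strict Implicit.
Import Defs.
Local Open Scope ring_scope.

(* If u v = 1 and a, b lie in the supports of u and v, then a + b lies in the
   support of u v = 1; so u has a single support point with coefficient 1, and
   the units are exactly the x^k.  Every f factors as (content f) * (f / content f),
   and when f has two support points so does the second factor, which is thus no
   unit: irreducibility forces content 1, and monolithicity follows from units
   being monomials.  Conversely, if f = c x^k * h then c divides every
   coefficient of f, hence c = 1 and c x^k is a unit. *)

Lemma coefL_shift (f : lpoly) (i : nat) : coefL f (lshift f + i%:Z) = (lpol f)`_i.
Proof. by rewrite /coefL ifT; [congr nth|]; lia. Qed.

Lemma coefL_lt_shift (f : lpoly) e : e < lshift f -> coefL f e = 0%N.
Proof. by move=> lt_e; rewrite /coefL ifF //; lia. Qed.

Lemma coefL_eq0 (f : lpoly) : lpol f = 0 -> forall e, coefL f e = 0%N.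
Proof. by move=> f0 e; rewrite /coefL f0 coef0; case: ifP. Qed.

Lemma coefL_neq0 (f : lpoly) : lpol f != 0 -> exists e, coefL f e <> 0%N.
Proof.
move=> f_neq0; exists (lshift f + (size (lpol f)).-1%:Z).
by rewrite coefL_shift -lead_coefE; apply/eqP; rewrite lead_coef_eq0.
Qed.

Lemma coefL_monoL c k e : coefL (monoL c k) e = if e == k then c else 0%N.
Proof.
rewrite /coefL /= coefC; have [->|ne_ek] := eqVneq e k.
  by rewrite lexx subrr /= natn.
by case: ifP => // ?; case: ifP => //; lia.
Qed.

Lemma coefL_oneL e : coefL oneL e = if e == 0 then 1%N else 0%N.
Proof. by rewrite -(coefL_monoL 1 0). Qed.

Lemma coefL_mulL_monoL c k h e :
  coefL (mulL (monoL c k) h) e = (c * coefL h (e - k))%N.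
Proof.
rewrite /coefL /= coefCM natn.
by do 2 case: ifP => ?; rewrite ?muln0 //; try congr (_ * nth _ _ _)%N; lia.
Qed.

Lemma mulLC g h : mulL g h = mulL h g.
Proof. by rewrite /mulL addrC mulrC. Qed.

Lemma coefL_mulL_ge g h a b :
  (coefL g a * coefL h b <= coefL (mulL g h) (a + b)%R)%N.
Proof.
have [lt_a|le_a] := ltrP a (lshift g); first by rewrite coefL_lt_shift.
have [lt_b|le_b] := ltrP b (lshift h); first by rewrite (coefL_lt_shift lt_b) muln0.
rewrite /coefL /= le_a le_b ifT; last by lia.
have -> : absz (a + b - (lshift g + lshift h))%R =
          (absz (a - lshift g)%R + absz (b - lshift h)%R)%N by lia.
rewrite coefM (bigD1 (Ordinal (leq_addr _ _))) //= addKn.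
exact: leq_addr.
Qed.

Lemma eqL_mulXn g (j : nat) : eqL (LP (lshift g - j%:Z) (lpol g * 'X^j)) g.
Proof.
move=> e; rewrite /coefL /= coefMXn.
by do ![case: ifP => ?] => //; first [congr nth | exfalso]; lia.
Qed.

Lemma eqL_LP_eq s p q : eqL (LP s p) (LP s q) -> p = q.
Proof. by move=> pq; apply/polyP => i; have := pq (s + i%:Z); rewrite !coefL_shift. Qed.

Lemma eqL_mulLl g g' h : eqL g g' -> eqL (mulL g h) (mulL g' h).
Proof.
wlog le_s : g g' / lshift g' <= lshift g => [wlog_gg' gg'|].
  have [/wlog_gg'|/ltW /wlog_gg' sym_gg' e] := lerP (lshift g') (lshift g); first exact.
  by rewrite sym_gg' // => e'; rewrite gg'.
(* Shifting the representation of g down to that of g' makes them equal. *)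
move=> gg'; have [j sE] : exists j : nat, lshift g - j%:Z = lshift g'.
  by exists (absz (lshift g - lshift g')); lia.
have g'E : g' = LP (lshift g - j%:Z) (lpol g * 'X^j).
  rewrite sE; case: g' gg' sE {le_s} => s' p' gg' /= sE; congr LP.
  by apply: (@eqL_LP_eq s') => e; rewrite -gg' -sE eqL_mulXn.
move=> e; rewrite g'E -(eqL_mulXn (mulL g h) j e) /mulL /=.
by rewrite addrAC mulrAC.
Qed.

Lemma unitLP u : unitL u <-> exists k, eqL u (monoL 1 k).
Proof.
split=> [[v uv]|[k uE]]; last first.
  exists (monoL 1 (- k)) => e.
  rewrite (eqL_mulLl _ uE) coefL_mulL_monoL coefL_monoL coefL_oneL mul1n.
  by do 2 case: eqP; lia.
have uv0 := uv 0; rewrite coefL_oneL eqxx in uv0.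
have [u0|/coefL_neq0 [a ua]] := eqVneq (lpol u) 0.
  by move: uv0; rewrite coefL_eq0 //= u0 mul0r.
have [v0|/coefL_neq0 [b vb]] := eqVneq (lpol v) 0.
  by move: uv0; rewrite coefL_eq0 //= v0 mulr0.
have supp_u e : coefL u e <> 0%N -> e = - b /\ coefL u e = 1%N.
  move=> ue; have := coefL_mulL_ge u v e b; rewrite uv coefL_oneL.
  by case: eqP => [eb0|_]; [split; [lia | nia] | nia].
exists (- b) => e; rewrite coefL_monoL.
case: eqP => [->|ne_eb]; first by case: (supp_u a ua) => <-.
by case: (coefL u e =P 0%N) => // /supp_u [/ne_eb].
Qed.

Lemma unitL_monomialL u : unitL u -> monomialL u.
Proof. by case/unitLP => k uE; exists 1%N, k. Qed.

Lemma unitL_suppL u a b : unitL u -> suppL u a -> suppL u b -> a = b.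
Proof.
by case/unitLP => k uE; rewrite /suppL !uE !coefL_monoL; do 2 case: eqP => // ->.
Qed.

Definition contentL (f : lpoly) : nat :=
  \big[gcdn/0%N]_(i < size (lpol f)) (lpol f)`_i.

Lemma dvdn_contentL d f : (d %| contentL f)%N <-> forall e, (d %| coefL f e)%N.
Proof.
split=> [/dvdn_biggcdP d_coef e | d_coef]; last first.
  by apply/dvdn_biggcdP => i _; rewrite -coefL_shift.
rewrite /coefL; case: ifP => // _.
have [lt_i|ge_i] := ltnP (absz (e - lshift f)) (size (lpol f)).
  exact: (d_coef (Ordinal lt_i)).
by rewrite nth_default.
Qed.

Lemma contentL_dvdn f e : (contentL f %| coefL f e)%N.
Proof. exact: (dvdn_contentL _ f).1 (dvdnn _) e. Qed.

Definition divL (f : lpoly) (d : nat) : lpoly :=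
  LP (lshift f) (map_poly (divn^~ d) (lpol f)).

Lemma coefL_divL f d e : coefL (divL f d) e = (coefL f e %/ d)%N.
Proof. by rewrite /coefL /=; case: ifP; rewrite ?coef_map_id0 ?div0n. Qed.

Lemma eqL_mulL_monoL_divL f d :
  (forall e, d %| coefL f e)%N -> eqL f (mulL (monoL d 0) (divL f d)).
Proof.
by move=> d_coef e; rewrite coefL_mulL_monoL subr0 coefL_divL mulnC divnK.
Qed.

Lemma suppL_divL f d e :
  (forall e, d %| coefL f e)%N -> suppL f e -> suppL (divL f d) e.
Proof.
rewrite /suppL coefL_divL => d_coef; case/dvdnP: (d_coef e) => q ->.
by case: d {d_coef} => [|d]; rewrite ?muln0 // mulnK //; nia.
Qed.

Lemma monomialL_unitL f g h :
  contentL f = 1%N -> eqL f (mulL g h) -> monomialL g -> unitL g.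
Proof.
move=> f1 fgh [c [k [_ gE]]]; apply/unitLP; exists k.
suff c1 : c = 1%N by rewrite -c1.
apply/eqP; rewrite -dvdn1 -f1; apply/dvdn_contentL => e.
by rewrite fgh (eqL_mulLl _ gE) coefL_mulL_monoL dvdn_mulr.
Qed.

Theorem irreducibleL_monolithicL f :
  (exists a b, a <> b /\ suppL f a /\ suppL f b) ->
  irreducibleL f <-> monolithicL f /\ contentL f = 1%N.
Proof.
move=> [a [b [ne_ab [fa fb]]]].
split=> [[f0 [_ f_irr]] | [[f0 f_mono] f1]].
  split; first by split=> // g h /f_irr [] /unitL_monomialL; [left | right].
  have d_coef := contentL_dvdn f.
  case: (f_irr _ _ (eqL_mulL_monoL_divL d_coef)) => [/unitLP [k dE] | div_unit].
    by have := dE k; rewrite !coefL_monoL eqxx; case: eqP.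
  by case: ne_ab; apply: (unitL_suppL div_unit); apply: suppL_divL.
split=> //; split=> [/unitL_suppL/(_ fa fb)/ne_ab // | g h fgh].
have fhg : eqL f (mulL h g) by rewrite -mulLC.
by case: (f_mono g h fgh) => [/(monomialL_unitL f1 fgh) | /(monomialL_unitL f1 fhg)];
  [left | right].
Qed.

Theorem lemma2p4 (n : nat) (c : 'I_n.+1 -> nat) (k : 'I_n.+1 -> int)
  (f : lpoly)
  (hc : forall i, (0 < c i)%N)
  (hk : forall i j : 'I_n.+1, (i < j)%N -> (k j < k i)%R)
  (hf : forall e : int,
        coefL f e = (\sum_(i < n.+1) (if k i == e then c i else 0%N))%N)
  (hsupp : exists a b : int, a <> b /\ suppL f a /\ suppL f b) :
  irreducibleL f <->
  (monolithicL f /\ (\big[gcdn/0%N]_(i < n.+1) c i)%N = 1%N).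
Proof.
have k_inj : injective k.
  by move=> i j kij; apply/val_inj; case: (ltngtP i j) => // /hk; rewrite kij ltxx.
have coef_k i : coefL f (k i) = c i.
  rewrite hf (bigD1 i) //= eqxx big1 ?addn0 // => j ne_ji.
  by case: eqP => // /k_inj eq_ji; rewrite eq_ji eqxx in ne_ji.
suff <- : contentL f = \big[gcdn/0%N]_(i < n.+1) c i.
  exact: irreducibleL_monolithicL.
apply/eqP; rewrite eqn_dvd; apply/andP; split.
  by apply/dvdn_biggcdP => i _; rewrite -coef_k contentL_dvdn.
apply/dvdn_contentL => e; rewrite hf; apply: dvdn_sum => i _.
by case: ifP => // _; apply: (biggcdn_inf i).
Qed.
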